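(* In the setting below, suppose the step size satisfies $0<\eta\le \frac{1}{L(K+1)}$. Then for every $k\ge 0$ the iterates of the PIAG method satisfy \[ F_{k+1}\le F_k-\frac{1}{2}\eta\|d_k\|^2+\eta^2\frac{L}{2}\sum_{j=(k-K)_+}^{k-1}\|d_j\|^2 . \]
   Context: Let $m,n\ge 1$ be integers and $\|\cdot\|$ the Euclidean norm on $\mathbb{R}^n$. For $i=1,\dots,m$, let $f_i:\mathbb{R}^n\to\mathbb{R}$ be continuously differentiable with $\|\nabla f_i(x)-\nabla f_i(y)\|\le L_i\|x-y\|$ for all $x,y$, where $L_i\ge 0$ (the $f_i$ are not assumed convex). Let $f=\frac1m\sum_{i=1}^m f_i$ and $L=\frac1m\sum_{i=1}^m L_i$. Assume $f$ is $\mu$-strongly convex for some $\mu>0$ (i.e. $x\mapsto f(x)-\frac{\mu}{2}\|x\|^2$ is convex). Let $r:\mathbb{R}^n\to(-\infty,\infty]$ be proper, closed and convex, let $F=f+r$, and let $x^*$ be the unique minimizer of $F$. For $\eta>0$ define $\mathrm{prox}_r^\eta(y)=\arg\min_{x\in\mathbb{R}^n}\{\frac12\|x-y\|^2+\eta r(x)\}$. PIAG method: fix an integer $K\ge 0$, a step size $\eta>0$ and $x_0\in\mathbb{R}^n$; for each $k\ge0$ and each $i$ let $\tau_{i,k}$ be any (deterministically chosen) integer with $\max(k-K,0)\le\tau_{i,k}\le k$; set $g_k=\frac1m\sum_{i=1}^m\nabla f_i(x_{\tau_{i,k}})$ and $x_{k+1}=\mathrm{prox}_r^\eta(x_k-\eta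 g_k)$. Define $d_k=(x_{k+1}-x_k)/\eta$ (equivalently $d_k=-g_k-h_{k+1}$, where $h_{k+1}\in\partial r(x_{k+1})$ is given by the optimality condition of the proximal step), and $F_k=F(x_k)-F(x^* )$. Write $(t)_+=\max(t,0)$; empty sums are zero. *)

From HB Require Import structures.
From mathcomp Require Import all_boot all_order all_algebra.
From mathcomp Require Import all_classical all_reals all_analysis.
Set Implicit Arguments. Unset Strict Implicit. Unset Printing Implicit Defensive.
Import Order.TTheory GRing.Theory Num.Theory.
Import numFieldNormedType.Exports.
Local Open Scope ring_scope.

Section PIAGDefs.
Variables (R : realType) (n : nat).
Local Notation V := 'rV[R]_n.

Definition dotp (u v : V) : R := \sum_(i < n) u ord0 i * v ord0 i.
Definition enorm (u : V) : R := Num.sqrt (dotp u u).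

Definition has_gradient (f : V -> R) (g : V -> V) : Prop :=
  forall x, differentiable f x /\ ('d f x : V -> R) = (fun h => dotp (g x) h).

Definition lipschitz_grad (g : V -> V) (Lc : R) : Prop :=
  forall x y, enorm (g x - g y) <= Lc * enorm (x - y).

Definition convex_fun (h : V -> R) : Prop :=
  forall (x y : V) (t : R), 0 <= t <= 1 ->
    h (t *: x + (1 - t) *: y) <= t * h x + (1 - t) * h y.

Definition strongly_convex (h : V -> R) (mu : R) : Prop :=
  convex_fun (fun x => h x - mu / 2 * enorm x ^+ 2).

Definition proper_fun (r : V -> \bar R) : Prop :=
  (forall x, (-oo < r x)%E) /\ (exists x, (r x < +oo)%E).

Definition closed_fun (r : V -> \bar R) : Prop :=
  forall x (a : R), (a%:E < r x)%E -> \forall y \near x, (a%:E < r y)%E.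

Definition convex_efun (r : V -> \bar R) : Prop :=
  forall (x y : V) (t : R), 0 <= t <= 1 ->
    (r ((t *: x + (1 - t) *: y)%R) <= t%:E * r x + (1 - t)%:E * r y)%E.

Definition is_prox (r : V -> \bar R) (eta : R) (y p : V) : Prop :=
  forall z, ((enorm (p - y) ^+ 2 / 2)%:E + eta%:E * r p <=
             (enorm (z - y) ^+ 2 / 2)%:E + eta%:E * r z)%E.

End PIAGDefs.

(* Each f_i satisfies the descent lemma at x_k, except that its gradient is
   evaluated at the stale point x_(tau k i).  Lipschitz continuity of the
   gradient, the triangle inequality along the last K steps and AM-GM bound
   the error by L_i/2 (K ||D_k||^2 + sum_(k-K <= j < k) ||D_j||^2), where
   D_j = x_(j+1) - x_j.  The variational inequality of the proximal step,
   tested at x_k, gives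
     eta r(x_(k+1)) <= eta r(x_k) - ||D_k||^2 - eta <g_k, D_k>.
   Adding the two, the gradient terms cancel, and eta L (K+1) <= 1 absorbs the
   K+1 copies of L/2 ||D_k||^2 into half of ||D_k||^2 / eta. *)

From HB Require Import structures.
From mathcomp Require Import all_boot all_order all_algebra.
From mathcomp Require Import all_classical all_reals all_analysis.
From mathcomp Require Import ring lra.
Set Implicit Arguments. Unset Strict Implicit. Unset Printing Implicit Defensive.
Import Order.TTheory GRing.Theory Num.Theory.
Import numFieldNormedType.Exports.
Local Open Scope ring_scope.

Section Euclidean.
Variables (R : realType) (n : nat).
Local Notation V := 'rV[R]_n.
Implicit Types u v w : V.

Lemma dotpC u v : dotp u v = dotp v u.
Proof. by apply: eq_bigr => i _; rewrite mulrC. Qed.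

Lemma dotpDl u v w : dotp (u + v) w = dotp u w + dotp v w.
Proof. by rewrite /dotp -big_split; apply: eq_bigr => i _; rewrite !mxE mulrDl. Qed.

Lemma dotpZl a u v : dotp (a *: u) v = a * dotp u v.
Proof. by rewrite /dotp mulr_sumr; apply: eq_bigr => i _; rewrite !mxE mulrA. Qed.

Lemma dotpNl u v : dotp (- u) v = - dotp u v.
Proof. by rewrite -scaleN1r dotpZl mulN1r. Qed.

Lemma dotpBl u v w : dotp (u - v) w = dotp u w - dotp v w.
Proof. by rewrite dotpDl dotpNl. Qed.

Lemma dotpDr u v w : dotp u (v + w) = dotp u v + dotp u w.
Proof. by rewrite dotpC dotpDl !(dotpC u). Qed.

Lemma dotpZr a u v : dotp u (a *: v) = a * dotp u v.
Proof. by rewrite dotpC dotpZl dotpC. Qed.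

Lemma dotpNr u v : dotp u (- v) = - dotp u v.
Proof. by rewrite dotpC dotpNl dotpC. Qed.

Lemma dotpBr u v w : dotp u (v - w) = dotp u v - dotp u w.
Proof. by rewrite dotpDr dotpNr. Qed.

Lemma dotp_suml (I : finType) (F : I -> V) v :
  dotp (\sum_(i : I) F i) v = \sum_(i : I) dotp (F i) v.
Proof.
rewrite /dotp exchange_big /=; apply: eq_bigr => j _.
by rewrite summxE mulr_suml.
Qed.

Lemma dotp0l v : dotp 0 v = 0.
Proof. by rewrite /dotp big1 // => i _; rewrite mxE mul0r. Qed.

Lemma dotpp_ge0 u : 0 <= dotp u u.
Proof. by apply: sumr_ge0 => i _; rewrite -expr2 sqr_ge0. Qed.

Lemma dotpp_eq0 u : (dotp u u == 0) = (u == 0).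
Proof.
apply/eqP/eqP => [u0|->]; last exact: dotp0l.
apply/rowP => j; rewrite mxE; apply/eqP; rewrite -sqrf_eq0.
by move/eqP: u0; rewrite psumr_eq0 => [/allP/(_ j (mem_index_enum j))|i _];
  rewrite ?sqr_ge0 // -expr2.
Qed.

Lemma enorm_ge0 u : 0 <= enorm u.
Proof. exact: sqrtr_ge0. Qed.

Lemma enorm_sqr u : enorm u ^+ 2 = dotp u u.
Proof. by rewrite sqr_sqrtr ?dotpp_ge0. Qed.

Lemma enormZ a u : enorm (a *: u) = `|a| * enorm u.
Proof. by rewrite /enorm dotpZl dotpZr mulrA -expr2 sqrtrM ?sqr_ge0 ?sqrtr_sqr. Qed.

Lemma enorm_gt0 u : u != 0 -> 0 < enorm u.
Proof. by move=> u0; rewrite sqrtr_gt0 lt_def dotpp_eq0 u0 dotpp_ge0. Qed.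

Lemma enorm_sqrZ a u : enorm (a *: u) ^+ 2 = a ^+ 2 * enorm u ^+ 2.
Proof. by rewrite enormZ exprMn real_normK ?num_real. Qed.

(* Cauchy-Schwarz, from || |v| u - |u| v ||^2 >= 0. *)
Lemma dotp_le_enorm u v : dotp u v <= enorm u * enorm v.
Proof.
have [->|/enorm_gt0 nu_gt0] := eqVneq u 0; first by rewrite dotp0l mulr_ge0 ?enorm_ge0.
have [->|/enorm_gt0 nv_gt0] := eqVneq v 0.
  by rewrite dotpC dotp0l mulr_ge0 ?enorm_ge0.
have := dotpp_ge0 (enorm v *: u - enorm u *: v).
rewrite !(dotpBl, dotpBr, dotpZl, dotpZr) (dotpC v u) -!enorm_sqr.
move=> expansion_ge0.
by rewrite -subr_ge0 -(pmulr_rge0 _ (mulr_gt0 nu_gt0 nv_gt0)); nra.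
Qed.

Lemma ler_enormD u v : enorm (u + v) <= enorm u + enorm v.
Proof.
rewrite -ler_sqr ?nnegrE ?addr_ge0 ?enorm_ge0 // sqrrD !enorm_sqr.
by rewrite dotpDl !dotpDr (dotpC v u); have := dotp_le_enorm u v; lra.
Qed.

Lemma ler_enorm_sum (F : nat -> V) a b :
  enorm (\sum_(a <= j < b) F j) <= \sum_(a <= j < b) enorm (F j).
Proof.
elim/big_ind2: _ => [|u1 u2 s1 s2 h1 h2|//]; first by rewrite /enorm dotp0l sqrtr0.
exact: le_trans (ler_enormD _ _) (lerD h1 h2).
Qed.

End Euclidean.

Section Elementary.
Variable R : realFieldType.

Lemma ler_of_forall_addtM (a b c : R) :
  (forall t, 0 < t <= 1 -> a <= b + t * c) -> a <= b.
Proof.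
move=> h; have [c_le0|c_gt0] := lerP c 0.
  by have := h 1; rewrite lexx ltr01 mul1r => /(_ isT); lra.
apply/ler_addgt0Pr => e e_gt0.
have t_gt0 : 0 < e / (e + c) by rewrite divr_gt0 // addr_gt0.
have t_le1 : e / (e + c) <= 1 by rewrite ler_pdivrMr ?addr_gt0 //; lra.
have tc_le : e / (e + c) * c <= e.
  by rewrite mulrAC ler_pdivrMr ?addr_gt0 //; nra.
by have := h _ (introT andP (conj t_gt0 t_le1)); lra.
Qed.

Lemma sum_mul_le_AMGM (e : nat -> R) (a : R) (lo hi N : nat) :
  (hi - lo <= N)%N -> 0 <= a ->
  (\sum_(lo <= j < hi) e j) * a <= (N%:R * a ^+ 2 + \sum_(lo <= j < hi) e j ^+ 2) / 2.
Proof.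
move=> hN a_ge0; rewrite mulr_suml.
apply: (@le_trans _ _ (\sum_(lo <= j < hi) ((a ^+ 2 + e j ^+ 2) / 2))).
  by apply: ler_sum => j _; have := sqr_ge0 (a - e j); nra.
rewrite -mulr_suml big_split /= sumr_const_nat ler_pM2r // lerD2r.
by rewrite -[_ *+ _]mulr_natl ler_wpM2r ?sqr_ge0 ?ler_nat.
Qed.

End Elementary.

Section Smooth.
Variables (R : realType) (n : nat).
Local Notation V := 'rV[R]_n.

Lemma has_gradient_along_line (f : V -> R) (g : V -> V) (x h : V) (t : R) :
  has_gradient f g ->
  derivable (fun s : R => f (x + s *: h)) t 1 /\
  'D_1 (fun s : R => f (x + s *: h)) t = dotp (g (x + t *: h)) h.
Proof.
move=> hg; have [dif dd] := hg (x + t *: h).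
have shift : (fun s : R => s^-1 *: (f (x + (s *: 1 + t) *: h) - f (x + t *: h))) =
             (fun s : R => s^-1 *: (f (s *: h + (x + t *: h)) - f (x + t *: h))).
  by apply/funext => s; rewrite [s%:A]mulr1 scalerDl addrCA addrC.
split; first by have := @diff_derivable _ _ _ f _ h dif; rewrite /derivable shift.
by rewrite /derive shift -/(derive f (x + t *: h) h) deriveE // dd.
Qed.

(* f minus its quadratic model along the segment [x, y] is nonincreasing,
   since its derivative is <g(x + s h) - g x, h> - s Lc ||h||^2 <= 0. *)
Lemma lipschitz_grad_upper_bound (f : V -> R) (g : V -> V) (Lc : R) :
  has_gradient f g -> lipschitz_grad g Lc -> forall x y,
  f y <= f x + dotp (g x) (y - x) + Lc / 2 * enorm (y - x) ^+ 2.
Proof.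
move=> hg hl x y.
set h := y - x; set c := dotp (g x) h; set q := Lc / 2 * enorm h ^+ 2.
pose p : {poly R} := c *: 'X + q *: 'X^2.
pose phi := (fun s : R => f (x + s *: h)) - horner p.
have dphi s : derivable phi s 1 /\
    'D_1 phi s = dotp (g (x + s *: h)) h - (c + q * (2 * s)).
  have [d1 e1] := has_gradient_along_line x h s hg.
  split; first exact/derivableB/derivable_horner.
  rewrite deriveB // e1 (@derive_val _ _ _ _ _ _ _ (is_derive_poly p s)).
  congr (_ - _).
  by rewrite /p derivD !derivZ derivX derivXn !hornerE /=; ring.
have dphi_le0 s : s \in `]0, 1[ -> derive1 phi s <= 0.
  rewrite in_itv /= derive1E (dphi s).2 => /andP[s_gt0 _].
  have := hl (x + s *: h) x.
  rewrite addrAC subrr add0r enormZ (ger0_norm (ltW s_gt0)).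
  have := dotp_le_enorm (g (x + s *: h) - g x) h; rewrite dotpBl -/c.
  have := enorm_ge0 h; rewrite /q; nra.
have phi_cont := derivable_within_continuous (fun s _ => (dphi s).1).
have := ler0_derive1_le_cc (fun s _ => (dphi s).1) dphi_le0 (phi_cont `[0, 1]).
move=> /(_ 1 0); rewrite !in_itv /= ler01 !lexx => /(_ isT isT isT).
change (f (x + 1 *: h) - p.[1] <= f (x + 0 *: h) - p.[0] -> f y <= f x + c + q).
rewrite /p !hornerE /= scale0r addr0 scale1r /h subrKC !(mulr0, mulr1); lra.
Qed.

End Smooth.

Section Prox.
Variables (R : realType) (n : nat).
Local Notation V := 'rV[R]_n.

Lemma fin_num_of_addlM_le (a c : R) (e b : \bar R) :
  0 < c -> (-oo < e)%E -> b \is a fin_num -> (a%:E + c%:E * e <= b)%E ->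
  e \is a fin_num.
Proof.
move=> c_gt0; case: e => [//| _ |//]; rewrite gt0_muley ?lte_fin // addey //.
by move=> /[swap]; rewrite leye_eq => /eqP ->.
Qed.

Lemma proper_fun_fin_num (r : V -> \bar R) :
  proper_fun r -> exists z, r z \is a fin_num.
Proof. by move=> [r_gtNy [z r_lty]]; exists z; apply/fin_numPlt; rewrite r_gtNy. Qed.

Lemma is_prox_fin_num (r : V -> \bar R) (eta : R) (y p : V) :
  0 < eta -> proper_fun r -> is_prox r eta y p -> r p \is a fin_num.
Proof.
move=> eta_gt0 r_proper hp; have [z rz_fin] := proper_fun_fin_num r_proper.
apply: fin_num_of_addlM_le eta_gt0 (r_proper.1 p) _ (hp z).
by rewrite fin_numD fin_numM.
Qed.

Lemma is_prox_variational (r : V -> \bar R) (eta : R) (y p z : V) (rp rz : R) :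
  0 < eta -> convex_efun r -> is_prox r eta y p -> r p = rp%:E -> r z = rz%:E ->
  eta * rp <= eta * rz + dotp (p - y) (z - p).
Proof.
(* Test the minimality of p against p + t (z - p), use convexity of r on [p, z],
   divide by t and let t -> 0. *)
move=> eta_gt0 r_cvx hp rpE rzE.
apply: (@ler_of_forall_addtM _ _ _ (dotp (z - p) (z - p) / 2)) => t /andP[t_gt0 t_le1].
have chord : (r (t *: z + (1 - t) *: p)%R <= (t * rz + (1 - t) * rp)%R%:E)%E.
  by have := r_cvx z p t; rewrite ltW //= t_le1 rpE rzE -!EFinM -EFinD; apply.
have eta_ge0 : (0 <= eta%:E)%E by rewrite lee_fin ltW.
have := le_trans (hp (t *: z + (1 - t) *: p)) (leeD2l _ (lee_wpmul2l eta_ge0 chord)).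
have -> : t *: z + (1 - t) *: p - y = (p - y) + t *: (z - p).
  by apply/matrixP => i j; rewrite !mxE; ring.
rewrite rpE -!EFinM -!EFinD lee_fin !enorm_sqr; move: (p - y) (z - p) => a b.
rewrite dotpDl !dotpDr !dotpZl !dotpZr (dotpC b a) => ineq.
by rewrite -(ler_pM2l t_gt0); nra.
Qed.

End Prox.

Section DelayedGradient.
Variables (R : realType) (n : nat).
Local Notation V := 'rV[R]_n.
Variable x : nat -> V.

Lemma ler_enorm_telescope lo t k : (lo <= t <= k)%N ->
  enorm (x k - x t) <= \sum_(lo <= j < k) enorm (x j.+1 - x j).
Proof.
move=> /andP[lo_le_t t_le_k]; rewrite -(telescope_sumr _ t_le_k).
apply: le_trans (ler_enorm_sum _ _ _) _.
rewrite (big_cat_nat lo_le_t t_le_k) /= lerDr.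
by apply: sumr_ge0 => j _; exact: enorm_ge0.
Qed.

Lemma delayed_descent (fi : V -> R) (gi : V -> V) (Lc : R) (K k t : nat) :
  has_gradient fi gi -> lipschitz_grad gi Lc -> 0 <= Lc -> (k - K <= t <= k)%N ->
  fi (x k.+1) <= fi (x k) + dotp (gi (x t)) (x k.+1 - x k)
    + Lc / 2 * ((K.+1)%:R * enorm (x k.+1 - x k) ^+ 2
                + \sum_(k - K <= j < k) enorm (x j.+1 - x j) ^+ 2).
Proof.
move=> hg hl Lc_ge0 ht; have := lipschitz_grad_upper_bound hg hl (x k) (x k.+1).
set D := x k.+1 - x k; set S := \sum_(_ <= j < _) _.
have delay : enorm (x k - x t) * enorm D <= (K%:R * enorm D ^+ 2 + S) / 2.
  apply: le_trans (ler_wpM2r (enorm_ge0 D) (ler_enorm_telescope ht)) _.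
  by apply: sum_mul_le_AMGM (enorm_ge0 D); rewrite leq_subLR addnC -leq_subLR.
have stale : dotp (gi (x k) - gi (x t)) D <= Lc * (enorm (x k - x t) * enorm D).
  rewrite mulrA; apply: le_trans (dotp_le_enorm _ _)
                              (ler_wpM2r (enorm_ge0 D) (hl _ _)).
rewrite dotpBl in stale; have := ler_wpM2l Lc_ge0 delay.
by rewrite [K.+1%:R]mulrSr; nra.
Qed.

End DelayedGradient.

Section PIAG.
Variables (R : realType) (m n : nat).
Local Notation V := 'rV[R]_n.
Variables (f : 'I_m -> V -> R) (gradf : 'I_m -> V -> V) (Li : 'I_m -> R).
Variables (r : V -> \bar R) (K : nat) (eta : R).
Variables (x : nat -> V) (tau : nat -> 'I_m -> nat).
Hypothesis hm : (0 < m)%N.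
Hypothesis hgrad : forall i, has_gradient (f i) (gradf i).
Hypothesis hLi : forall i, 0 <= Li i.
Hypothesis hlip : forall i, lipschitz_grad (gradf i) (Li i).
Hypothesis hrv : convex_efun r.
Hypothesis htau : forall k i, (k - K <= tau k i <= k)%N.
Hypothesis heta : 0 < eta.

Local Notation mean_f y := (m%:R^-1 * \sum_(i < m) f i y).
Local Notation Lbar := (m%:R^-1 * \sum_(i < m) Li i).
Local Notation g k := (m%:R^-1 *: \sum_(i < m) gradf i (x (tau k i))).

Hypothesis hiter : forall k, is_prox r eta (x k - eta *: g k) (x k.+1).

Lemma mean_delayed_descent k :
  mean_f (x k.+1) <= mean_f (x k) + dotp (g k) (x k.+1 - x k)
    + Lbar / 2 * ((K.+1)%:R * enorm (x k.+1 - x k) ^+ 2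
                  + \sum_(k - K <= j < k) enorm (x j.+1 - x j) ^+ 2).
Proof.
have m_gt0 : 0 < m%:R^-1 :> R by rewrite invr_gt0 ltr0n.
rewrite dotpZl dotp_suml -!mulrA -!mulrDr ler_pM2l // !mulr_suml -!big_split.
by apply: ler_sum => i _; rewrite mulrA; apply: delayed_descent.
Qed.

Lemma prox_step_descent k rp rk : r (x k.+1) = rp%:E -> r (x k) = rk%:E ->
  eta * rp <= eta * rk - enorm (x k.+1 - x k) ^+ 2 - eta * dotp (g k) (x k.+1 - x k).
Proof.
move=> rpE rkE; have := is_prox_variational heta hrv (hiter k) rpE rkE.
move: (x k.+1) (x k) (g k) => a b c.
rewrite opprB addrCA addrC -[b - a]opprB dotpNr dotpDl dotpZl -enorm_sqr; lra.
Qed.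

Lemma piag_descent k rp rk :
  eta * (Lbar * (K.+1)%:R) <= 1 -> r (x k.+1) = rp%:E -> r (x k) = rk%:E ->
  mean_f (x k.+1) + rp <=
    mean_f (x k) + rk - eta * enorm (eta^-1 *: (x k.+1 - x k)) ^+ 2 / 2
    + eta ^+ 2 * Lbar / 2 * \sum_(k - K <= j < k) enorm (eta^-1 *: (x j.+1 - x j)) ^+ 2.
Proof.
move=> heta_L rpE rkE.
have smooth := mean_delayed_descent k; have prox := prox_step_descent rpE rkE.
rewrite (eq_bigr _ (fun j _ => enorm_sqrZ _ _)) -mulr_sumr enorm_sqrZ.
set A := enorm (x k.+1 - x k) ^+ 2 in smooth prox *.
set S := \sum_(k - K <= j < k) enorm (x j.+1 - x j) ^+ 2 in smooth *.
set G := dotp (g k) (x k.+1 - x k) in smooth prox.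
set L := m%:R^-1 * \sum_(i < m) Li i in heta_L smooth *.
have eta_neq0 : eta != 0 by rewrite gt_eqF.
have -> : eta * (eta^-1 ^+ 2 * A) / 2 = A / eta / 2 by field.
have -> : eta ^+ 2 * L / 2 * (eta^-1 ^+ 2 * S) = L * S / 2 by field.
have {}prox : rp <= rk - A / eta - G.
  by rewrite -(ler_pM2l heta) !mulrBr [eta * (A / eta)]mulrC divfK.
have step_size : L * (K.+1)%:R * A <= A / eta.
  by rewrite ler_pdivlMr //; have := ler_wpM2r (sqr_ge0 _ : 0 <= A) heta_L; lra.
lra.
Qed.

End PIAG.

Theorem lemma1 (R : realType) (m n : nat) (hm : (0 < m)%N)
  (f : 'I_m -> 'rV[R]_n -> R) (gradf : 'I_m -> 'rV[R]_n -> 'rV[R]_n)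
  (Li : 'I_m -> R)
  (hgrad : forall i, has_gradient (f i) (gradf i))
  (hcont : forall i, continuous (gradf i))
  (hLi : forall i, 0 <= Li i)
  (hlip : forall i, lipschitz_grad (gradf i) (Li i))
  (mu : R) (hmu : 0 < mu)
  (hsc : strongly_convex (fun x => (m%:R)^-1 * \sum_(i < m) f i x) mu)
  (r : 'rV[R]_n -> \bar R)
  (hrp : proper_fun r) (hrc : closed_fun r) (hrv : convex_efun r)
  (xstar : 'rV[R]_n)
  (hxstar : forall x, (((m%:R)^-1 * \sum_(i < m) f i xstar)%:E + r xstar
                       <= ((m%:R)^-1 * \sum_(i < m) f i x)%:E + r x)%E)
  (K : nat) (eta : R) (x : nat -> 'rV[R]_n) (tau : nat -> 'I_m -> nat)
  (htau : forall k i, (k - K <= tau k i <= k)%N)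
  (heta : 0 < eta) (heta2 : eta * (((m%:R)^-1 * \sum_(i < m) Li i) * (K.+1)%:R) <= 1)
  (hiter : forall k, is_prox r eta
             (x k - eta *: ((m%:R)^-1 *: \sum_(i < m) gradf i (x (tau k i))))
             (x k.+1))
  (k : nat) :
  let F := fun y => (((m%:R)^-1 * \sum_(i < m) f i y)%:E + r y)%E in
  let L := (m%:R)^-1 * \sum_(i < m) Li i in
  let d := fun j => eta^-1 *: (x j.+1 - x j) in
  (F (x k.+1) - F xstar <=
     F (x k) - F xstar - (eta * enorm (d k) ^+ 2 / 2)%:E
     + (eta ^+ 2 * L / 2 * \sum_(k - K <= j < k) enorm (d j) ^+ 2)%:E)%E.
Proof.
cbv zeta; have [z rz_fin] := proper_fun_fin_num hrp.
have rp_fin := is_prox_fin_num heta hrp (hiter k).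
have rs_fin : r xstar \is a fin_num.
  have xstar_le := hxstar z; rewrite -[r xstar]mul1e in xstar_le.
  by apply: fin_num_of_addlM_le ltr01 (hrp.1 xstar) _ xstar_le; rewrite fin_numD rz_fin.
rewrite -(fineK rp_fin) -(fineK rs_fin).
case rkE: (r (x k)) => [rk| |]; last by have := hrp.1 (x k); rewrite rkE.
  rewrite -!(EFinD, EFinN) lee_fin.
  have := piag_descent hm hgrad hLi hlip hrv htau heta hiter heta2 (esym (fineK rp_fin)) rkE.
  lra.
by rewrite addey // !addye // leey.
Qed.
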